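(* Let $\{p_{(R,\alpha)}(\mathbf{x})\}_{(R,\alpha)}$, $\delta\in[0,\varepsilon)$, be a family of replacement rules, each satisfying the Fixation Axiom, that satisfies Assumption 2, and let $\nu\in(0,1)$. Then: (a) $\rho_A$, $\rho_a$, and $\pi_{\mathrm{RMC}}(\mathbf{x})$ for each $\mathbf{x}\in\{0,1\}^G\setminus\{\mathbf{a},\mathbf{A}\}$ are smooth functions of $\delta\in[0,\varepsilon)$; (b) for each $\mathbf{x}\in\{0,1\}^G$, $\pi_{\mathrm{MSS}}(\mathbf{x})$ (defined for $u\in(0,1]$) extends uniquely to a smooth function of $(u,\delta)\in[0,1]\times[0,\varepsilon)$; (c) for each $\mathbf{x}\in\{0,1\}^G\setminus\{\mathbf{a},\mathbf{A}\}$, $\mathbb{P}_{\mathrm{MSS}}[\mathbf{X}=\mathbf{x}\mid\mathbf{X}\notin\{\mathbf{a},\mathbf{A}\}]$ extends uniquely to a smooth function of $(u,\delta)\in[0,1]\times[0,\varepsilon)$.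
   Context: Setting. $G$ is a finite nonempty set of genetic sites. A state is $\mathbf{x}\in\{0,1\}^G$; $\mathbf{1}_S$ has $x_g=1$ iff $g\in S$; $\mathbf{a}=\mathbf{1}_\emptyset$, $\mathbf{A}=\mathbf{1}_G$. A replacement event is $(R,\alpha)$ with $R\subseteq G$, $\alpha:R\to G$; a replacement rule gives for each state a probability distribution $\{p_{(R,\alpha)}(\mathbf{x})\}$ over events. With mutation probability $u\in[0,1]$ and bias $\nu\in(0,1)$, the evolutionary Markov chain moves from $\mathbf{x}$: draw $(R,\alpha)$ with probability $p_{(R,\alpha)}(\mathbf{x})$; independently for $g\in R$, $x'_g=x_{\alpha(g)}$ w.p. $1-u$, $x'_g=1$ w.p. $u\nu$, $x'_g=0$ w.p. $u(1-\nu)$; $x'_g=x_g$ for $g\notin R$. Fixation Axiom: there exist $g\in G$, $m\ge1$, events $(R_k,\alpha_k)_{k=1}^m$ with $p_{(R_k,\alpha_k)}(\mathbf{x})>0$ for all $k,\mathbf{x}$, $g\in R_k$ for some $k$, and $\tilde\alpha_1\circ\cdots\circ\tilde\alpha_m(h)=g$ for all $h$, where $\tilde\alpha_k$ equals $\alpha_k$ on $R_k$ and the identity elsewhere. $e_{gh}(\mathbf{x})=\sum_{(R,\alpha):h\in R,\alpha(h)=g}p_{(R,\alpha)}(\mathbf{x})$, $b_g=\sum_he_{gh}$, $d_g=\sum_he_{hg}$, $b=\sum_gb_g$. Fixation probabilities (at $u=0$): $\mu_A(\mathbf{1}_{\{g\}})=d_g(\mathbf{a})/b(\mathbf{a})$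 (zero elsewhere), $\mu_a(\mathbf{1}_{G\setminus\{g\}})=d_g(\mathbf{A})/b(\mathbf{A})$ (zero elsewhere), $\rho_A=\sum_\mathbf{x}\mu_A(\mathbf{x})\lim_tP^{(t)}_{\mathbf{x}\to\mathbf{A}}$, $\rho_a=\sum_\mathbf{x}\mu_a(\mathbf{x})\lim_tP^{(t)}_{\mathbf{x}\to\mathbf{a}}$. For $u>0$, $\pi_{\mathrm{MSS}}$ is the unique stationary distribution (probability $\mathbb{P}_{\mathrm{MSS}}$, random state $\mathbf{X}$); $\pi_{\mathrm{RMC}}(\mathbf{x})=\lim_{u\to0}\pi_{\mathrm{MSS}}(\mathbf{x})/(1-\pi_{\mathrm{MSS}}(\mathbf{a})-\pi_{\mathrm{MSS}}(\mathbf{A}))$ for $\mathbf{x}\notin\{\mathbf{a},\mathbf{A}\}$. Assumption 2 (weak selection): for each event, $p_{(R,\alpha)}(\mathbf{x})$ varies smoothly with $\delta\in[0,\varepsilon)$ for each state $\mathbf{x}$, and at $\delta=0$ it is independent of $\mathbf{x}$. *)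

From HB Require Import structures.
From mathcomp Require Import all_boot all_order all_algebra.
From mathcomp Require Import all_classical all_reals all_analysis.
Set Implicit Arguments. Unset Strict Implicit. Unset Printing Implicit Defensive.
Import Order.TTheory GRing.Theory Num.Theory.
Import numFieldNormedType.Exports.
Local Open Scope classical_set_scope.
Local Open Scope ring_scope.

Section Model.
Variable G : finType.

Definition state := {ffun G -> bool}.
Definition ind (S : {set G}) : state := [ffun g => g \in S].
Definition st_a : state := ind finset.set0.
Definition st_A : state := ind [set: G].

(* A replacement event (R, alpha), R ⊆ G, alpha : R -> G, encoded as
   e : G -> option G with R = {g | e g <> None} and alpha g = the value. *)
Definition event := {ffun G -> option G}.
Definition evR (e : event) : {set G} := [set g | e g != None].
Definition alpha_tilde (e : event) (h : G) : G :=
  if e h is Some g then g else h.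
Definition comp_tilde (s : seq event) : G -> G :=
  foldr (fun e f => alpha_tilde e \o f) id s.

Variable R : realType.

Definition rule := event -> state -> R.

Definition is_rule (p : rule) : Prop :=
  forall x, (forall e, 0 <= p e x) /\ \sum_(e : event) p e x = 1.

Definition fixation_axiom (p : rule) : Prop :=
  exists g : G, exists s : seq event,
    s != [::] /\
    (forall e, e \in s -> forall x, 0 < p e x) /\
    (exists2 e, e \in s & g \in evR e) /\
    (forall h, comp_tilde s h = g).

Definition e_gh (p : rule) (g h : G) (x : state) : R :=
  \sum_(e : event | e h == Some g) p e x.
Definition b_g (p : rule) g x : R := \sum_(h : G) e_gh p g h x.
Definition d_g (p : rule) g x : R := \sum_(h : G) e_gh p h g x.
Definition b_tot (p : rule) x : R := \sum_(g : G) b_g p g x.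

(* one-site update probability: site g in R copying from alpha(g) = i *)
Definition site_prob (u nu : R) (xi : bool) (b : bool) : R :=
  (1 - u) * (xi == b)%:R + u * nu * b%:R + u * (1 - nu) * (~~ b)%:R.

Definition trans (p : rule) (u nu : R) (x y : state) : R :=
  \sum_(e : event) p e x *
    \prod_(g : G) (if e g is Some i then site_prob u nu (x i) (y g)
                   else (x g == y g)%:R).

Fixpoint trans_t (p : rule) (u nu : R) (t : nat) (x y : state) : R :=
  if t is t'.+1 then \sum_(z : state) trans_t p u nu t' x z * trans p u nu z y
  else (x == y)%:R.

Definition mu_A (p : rule) (x : state) : R :=
  \sum_(g : G) (x == ind [set g])%:R * (d_g p g st_a / b_tot p st_a).
Definition mu_a (p : rule) (x : state) : R :=
  \sum_(g : G) (x == ind (~: [set g]))%:R * (d_g p g st_A / b_tot p st_A).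
Definition rho_A (p : rule) (nu : R) : R :=
  \sum_(x : state) mu_A p x * limn (fun t => trans_t p 0 nu t x st_A).
Definition rho_a (p : rule) (nu : R) : R :=
  \sum_(x : state) mu_a p x * limn (fun t => trans_t p 0 nu t x st_a).

Definition stationary (p : rule) (u nu : R) (pi : state -> R) : Prop :=
  (forall x, 0 <= pi x) /\ \sum_(x : state) pi x = 1 /\
  (forall y, \sum_(x : state) pi x * trans p u nu x y = pi y).

End Model.

Section Smooth.
Variable R : realType.

Definition smooth_on_Ico (eps : R) (f : R -> R) : Prop :=
  exists U : set R, open U /\ `[0, eps[%classic `<=` U /\
  exists D : nat -> R -> R,
    (forall d, 0 <= d < eps -> D 0%N d = f d) /\
    (forall n d, U d -> is_derive d 1 (D n) (D n.+1 d)).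

Definition dom2 (eps : R) : set (R * R) :=
  [set z | 0 <= z.1 <= 1 /\ 0 <= z.2 < eps].

(* F (u, delta) is smooth (C^oo) on [0,1] x [0,eps): it agrees there with a
   function on an open set U containing [0,1] x [0,eps) having continuous
   partial derivatives of all orders; D i j is the partial derivative of
   order i in u and j in delta. *)
Definition smooth_on_dom2 (eps : R) (F : R -> R -> R) : Prop :=
  exists U : set (R * R), open U /\ dom2 eps `<=` U /\
  exists D : nat -> nat -> R -> R -> R,
    (forall z, dom2 eps z -> D 0%N 0%N z.1 z.2 = F z.1 z.2) /\
    (forall i j z, U z ->
       is_derive z.1 1 (fun s => D i j s z.2) (D i.+1 j z.1 z.2) /\
       is_derive z.2 1 (fun s => D i j z.1 s) (D i j.+1 z.1 z.2) /\
       {for z, continuous (fun q : R * R => D i j q.1 q.2)}).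

Definition extends_uniquely_smooth (eps : R) (f : R -> R -> R) : Prop :=
  (exists F, smooth_on_dom2 eps F /\
     forall u d, 0 < u <= 1 -> 0 <= d < eps -> F u d = f u d) /\
  (forall F1 F2,
     smooth_on_dom2 eps F1 -> (forall u d, 0 < u <= 1 -> 0 <= d < eps -> F1 u d = f u d) ->
     smooth_on_dom2 eps F2 -> (forall u d, 0 < u <= 1 -> 0 <= d < eps -> F2 u d = f u d) ->
     forall z, dom2 eps z -> F1 z.1 z.2 = F2 z.1 z.2).
End Smooth.

From HB Require Import structures.
From mathcomp Require Import all_boot all_order all_algebra.
From mathcomp Require Import all_classical all_reals all_analysis.
From mathcomp Require Import ring lra.
Set Implicit Arguments. Unset Strict Implicit. Unset Printing Implicit Defensive.
Import Order.TTheory GRing.Theory Num.Theory.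
Import numFieldNormedType.Exports.
Local Open Scope classical_set_scope.
Local Open Scope ring_scope.

(* Transitions out of the two monomorphic states are mutations, of order [u];
   dividing them by [u] gives a kernel whose rates stay positive at [u = 0].
   Replacing one column of its Laplacian by the weights (1 on monomorphic
   states, [u] elsewhere) yields a matrix, polynomial in [u] and in the rule
   probabilities, that stays invertible on [0,1] x [0,eps) because [a] is
   reachable from every state (fixation axiom, plus one mutation out of [A]).
   Cramer's rule then writes [pi], and the conditional distribution on
   polymorphic states, as quotients of adjugate entries with nonvanishing
   denominators; the fixation probabilities are absorption probabilities of the
   chain at [u = 0], Cramer quotients of its fundamental matrix. Rational
   expressions in [u] and in smooth functions of [d] are smooth, since their
   partial derivatives are again such expressions, computed syntactically. *)

Lemma continuous_pair1 (T S : topologicalType) (y : S) : continuous (fun x : T => (x, y)).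
Proof. by move=> x; apply: cvg_pair; [exact: cvg_id|exact: cvg_cst]. Qed.

Lemma continuous_pair2 (T S : topologicalType) (x : T) : continuous (fun y : S => (x, y)).
Proof. by move=> y; apply: cvg_pair; [exact: cvg_cst|exact: cvg_id]. Qed.

Lemma dom2_0 (R : realType) (eps d : R) : 0 <= d < eps -> dom2 eps (0, d).
Proof. by split => //=; rewrite lexx ler01. Qed.

(** * Smoothness of rational expressions in smooth functions *)

Section RationalExpressions.
Variables (R : realType) (K : Type) (fam : K -> nat -> R -> R) (U : set R).
Hypothesis U_open : open U.
Hypothesis fam_derive : forall k n y, U y -> is_derive y 1 (fam k n) (fam k n.+1 y).

(* Rational expressions in a variable [u] and in the functions [fam k n] of a
   second variable [d]; [RAtom k n] stands for the [n]-th derivative of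
   [fam k 0]. *)
Inductive rexpr :=
| RVar | RCst of R | RAtom of K & nat
| RAdd of rexpr & rexpr | RMul of rexpr & rexpr | RInv of rexpr.

Fixpoint reval (e : rexpr) (z : R * R) : R :=
  match e with
  | RVar => z.1
  | RCst c => c
  | RAtom k n => fam k n z.2
  | RAdd a b => reval a z + reval b z
  | RMul a b => reval a z * reval b z
  | RInv a => (reval a z)^-1
  end.

Fixpoint defined_at (e : rexpr) (z : R * R) : Prop :=
  match e with
  | RAdd a b | RMul a b => defined_at a z /\ defined_at b z
  | RInv a => defined_at a z /\ reval a z != 0
  | _ => True
  end.

Fixpoint pderiv1 (e : rexpr) : rexpr :=
  match e with
  | RVar => RCst 1
  | RCst _ | RAtom _ _ => RCst 0
  | RAdd a b => RAdd (pderiv1 a) (pderiv1 b)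
  | RMul a b => RAdd (RMul (pderiv1 a) b) (RMul a (pderiv1 b))
  | RInv a => RMul (RCst (-1)) (RMul (RInv a) (RMul (RInv a) (pderiv1 a)))
  end.

Fixpoint pderiv2 (e : rexpr) : rexpr :=
  match e with
  | RVar | RCst _ => RCst 0
  | RAtom k n => RAtom k n.+1
  | RAdd a b => RAdd (pderiv2 a) (pderiv2 b)
  | RMul a b => RAdd (RMul (pderiv2 a) b) (RMul a (pderiv2 b))
  | RInv a => RMul (RCst (-1)) (RMul (RInv a) (RMul (RInv a) (pderiv2 a)))
  end.

Lemma defined_pderiv1 e z : defined_at e z -> defined_at (pderiv1 e) z.
Proof. by elim: e => //= [a IHa b IHb|a IHa b IHb|a IHa] [] *; do !split; auto. Qed.

Lemma defined_pderiv2 e z : defined_at e z -> defined_at (pderiv2 e) z.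
Proof. by elim: e => //= [a IHa b IHb|a IHa b IHb|a IHa] [] *; do !split; auto. Qed.

Lemma defined_iter_pderiv i j e z :
  defined_at e z -> defined_at (iter i pderiv1 (iter j pderiv2 e)) z.
Proof.
move=> ez; elim: i => [|i IH]; last exact: defined_pderiv1.
by elim: j => //= j IH; apply: defined_pderiv2.
Qed.

Lemma pderiv12C e z : reval (pderiv2 (pderiv1 e)) z = reval (pderiv1 (pderiv2 e)) z.
Proof.
elim: e => //= [a IHa b IHb|a IHa b IHb|a IHa]; rewrite ?IHa ?IHb //; ring.
Qed.

Lemma is_derive_pderiv1 e x y : defined_at e (x, y) ->
  is_derive x 1 (fun s => reval e (s, y)) (reval (pderiv1 e) (x, y)).
Proof.
elim: e => /= [_|c _|k n _|a IHa b IHb [da db]|a IHa b IHb [da db]|a IHa [da a0]].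
- exact: is_derive_id.
- exact: is_derive_cst.
- exact: is_derive_cst.
- exact: is_deriveD (IHa da) (IHb db).
- by apply: is_derive_eq (is_deriveM (IHa da) (IHb db)) _; rewrite /GRing.scale /=; ring.
- by apply: is_derive_eq (is_deriveV a0 (IHa da)) _; rewrite /GRing.scale /= -exprVn; ring.
Qed.

Lemma is_derive_pderiv2 e x y : U y -> defined_at e (x, y) ->
  is_derive y 1 (fun s => reval e (x, s)) (reval (pderiv2 e) (x, y)).
Proof.
move=> Uy; elim: e => /= [_|c _|k n _|a IHa b IHb [da db]|a IHa b IHb [da db]|a IHa [da a0]].
- exact: is_derive_cst.
- exact: is_derive_cst.
- exact: fam_derive.
- exact: is_deriveD (IHa da) (IHb db).
- by apply: is_derive_eq (is_deriveM (IHa da) (IHb db)) _; rewrite /GRing.scale /=; ring.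
- by apply: is_derive_eq (is_deriveV a0 (IHa da)) _; rewrite /GRing.scale /= -exprVn; ring.
Qed.

Lemma continuous_reval e z : U z.2 -> defined_at e z -> {for z, continuous (reval e)}.
Proof.
move=> Uz; elim: e => /= [_|c _|k n _|a IHa b IHb [da db]|a IHa b IHb [da db]|a IHa [da a0]].
- exact: cvg_fst.
- exact: cvg_cst.
- apply: (continuous_comp (f := snd)); first exact: cvg_snd.
  have fD := fam_derive k n Uz.
  have : derivable (fam k n) z.2 1 by apply: ex_derive.
  by move/derivable1_diffP; exact: differentiable_continuous.
- exact: cvgD (IHa da) (IHb db).
- exact: cvgM (IHa da) (IHb db).
- exact: cvgV a0 (IHa da).
Qed.

Lemma defined_near e z : U z.2 -> defined_at e z ->
  \forall w \near z, U w.2 /\ defined_at e w.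
Proof.
move=> Uz; have Unear : \forall w \near z, U w.2.
  by apply: (cvg_snd : {for z, continuous snd}); exact: U_open.
elim: e => /= [_|_ _|_ _ _|a IHa b IHb [da db]|a IHa b IHb [da db]|a IHa [da a0]];
  try by apply: filterS Unear.
- by apply: filterS (filterI (IHa da) (IHb db)) => w [[Uw ?] [_ ?]].
- by apply: filterS (filterI (IHa da) (IHb db)) => w [[Uw ?] [_ ?]].
- have a_neq0 := cvgr_neq0 _ (continuous_reval Uz da) a0.
  near=> w.
  have [Uw dw] : U w.2 /\ defined_at a w by near: w; exact: IHa.
  by do !split => //; near: w; exact: a_neq0.
Unshelve. all: by end_near.
Qed.

Lemma pderiv2_iter_pderiv1 i e x y : U y -> defined_at e (x, y) ->
  reval (pderiv2 (iter i pderiv1 e)) (x, y) = reval (iter i pderiv1 (pderiv2 e)) (x, y).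
Proof.
elim: i x => [//|i IH] x Uy ex /=; rewrite pderiv12C.
have D1 := is_derive_pderiv1 (defined_pderiv2 (defined_iter_pderiv i 0 ex)).
have D2 := is_derive_pderiv1 (defined_iter_pderiv i 1 ex).
have near_eq : \forall s \near x, reval (pderiv2 (iter i pderiv1 e)) (s, y) =
                                  reval (iter i pderiv1 (pderiv2 e)) (s, y).
  have near_def : \forall s \near x, U y /\ defined_at e (s, y).
    exact: continuous_pair1 (defined_near (z := (x, y)) Uy ex).
  by apply: filterS near_def => s [_ es]; exact: IH.
have D1' := near_eq_is_derive near_eq D1.
by rewrite -(@derive_val _ _ _ _ _ _ _ D2) -(@derive_val _ _ _ _ _ _ _ D1').
Qed.

Definition rpartial (e : rexpr) (i j : nat) (u d : R) : R :=
  reval (iter i pderiv1 (iter j pderiv2 e)) (u, d).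

Lemma rpartial_spec e i j z : U z.2 -> defined_at e z ->
  [/\ is_derive z.1 1 (fun s => rpartial e i j s z.2) (rpartial e i.+1 j z.1 z.2),
      is_derive z.2 1 (fun s => rpartial e i j z.1 s) (rpartial e i j.+1 z.1 z.2) &
      {for z, continuous (fun q : R * R => rpartial e i j q.1 q.2)}].
Proof.
case: z => x y /= Uy ez; have eij := defined_iter_pderiv i j ez; split.
- exact: is_derive_pderiv1.
- rewrite /rpartial /= -pderiv2_iter_pderiv1 //; last exact: (defined_iter_pderiv 0 j).
  exact: is_derive_pderiv2.
- have -> : (fun q : R * R => rpartial e i j q.1 q.2) = reval (iter i pderiv1 (iter j pderiv2 e)).
    by apply/funext => -[].
  exact: continuous_reval.
Qed.

Lemma open_defined e : open [set z | U z.2 /\ defined_at e z].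
Proof. by rewrite openE => z [Uz ez]; exact: defined_near. Qed.

Definition rational_on (D : set (R * R)) (f : R * R -> R) :=
  exists e, forall z, D z -> defined_at e z /\ reval e z = f z.

Section RationalClosure.
Variable D : set (R * R).

Lemma rational_ext f g : rational_on D f -> (forall z, D z -> f z = g z) -> rational_on D g.
Proof. by move=> [e He] fg; exists e => z Dz; rewrite -fg //; exact: He. Qed.

Lemma rational_cst c : rational_on D (fun=> c).
Proof. by exists (RCst c). Qed.

Lemma rational_fst : rational_on D fst.
Proof. by exists RVar. Qed.

Lemma rational_atom k : rational_on D (fun z => fam k 0 z.2).
Proof. by exists (RAtom k 0). Qed.

Lemma rational_add f g : rational_on D f -> rational_on D g -> rational_on D (f \+ g).
Proof.
move=> [a Ha] [b Hb]; exists (RAdd a b) => z Dz /=.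
by case: (Ha z Dz) (Hb z Dz) => da -> [db ->].
Qed.

Lemma rational_mul f g : rational_on D f -> rational_on D g -> rational_on D (f \* g).
Proof.
move=> [a Ha] [b Hb]; exists (RMul a b) => z Dz /=.
by case: (Ha z Dz) (Hb z Dz) => da -> [db ->].
Qed.

Lemma rational_inv f : rational_on D f -> (forall z, D z -> f z != 0) ->
  rational_on D (fun z => (f z)^-1).
Proof.
move=> [a Ha] f_neq0; exists (RInv a) => z Dz /=.
by case: (Ha z Dz) => da ->; do !split => //; exact: f_neq0.
Qed.

Lemma rational_opp f : rational_on D f -> rational_on D (fun z => - f z).
Proof.
move=> rf; apply: rational_ext (rational_mul (rational_cst (-1)) rf) _ => z _.
by rewrite /= mulN1r.
Qed.

Lemma rational_sub f g : rational_on D f -> rational_on D g -> rational_on D (fun z => f z - g z).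
Proof. by move=> rf rg; exact: rational_add rf (rational_opp rg). Qed.

Lemma rational_div f g : rational_on D f -> rational_on D g ->
  (forall z, D z -> g z != 0) -> rational_on D (fun z => f z / g z).
Proof. by move=> rf rg g_neq0; exact: rational_mul rf (rational_inv rg g_neq0). Qed.

Lemma rational_sum (I : Type) (r : seq I) (P : pred I) (F : I -> R * R -> R) :
  (forall i, P i -> rational_on D (F i)) ->
  rational_on D (fun z => \sum_(i <- r | P i) F i z).
Proof.
move=> rF; elim: r => [|i r IH].
  by apply: rational_ext (rational_cst 0) _ => z _; rewrite big_nil.
rewrite /=; case Pi: (P i).
  by apply: rational_ext (rational_add (rF i Pi) IH) _ => z _; rewrite big_cons Pi.
by apply: rational_ext IH _ => z _; rewrite big_cons Pi.
Qed.

Lemma rational_prod (I : Type) (r : seq I) (P : pred I) (F : I -> R * R -> R) :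
  (forall i, P i -> rational_on D (F i)) ->
  rational_on D (fun z => \prod_(i <- r | P i) F i z).
Proof.
move=> rF; elim: r => [|i r IH].
  by apply: rational_ext (rational_cst 1) _ => z _; rewrite big_nil.
case Pi: (P i).
  by apply: rational_ext (rational_mul (rF i Pi) IH) _ => z _; rewrite big_cons Pi.
by apply: rational_ext IH _ => z _; rewrite big_cons Pi.
Qed.

Lemma rational_det n (M : R * R -> 'M[R]_n) :
  (forall i j, rational_on D (fun z => M z i j)) -> rational_on D (fun z => \det (M z)).
Proof.
move=> rM; apply: rational_sum => s _; apply: rational_mul; first exact: rational_cst.
by apply: rational_prod => i _; exact: rM.
Qed.

Lemma rational_adj n (M : R * R -> 'M[R]_n) :
  (forall i j, rational_on D (fun z => M z i j)) ->
  forall i j, rational_on D (fun z => \adj (M z) i j).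
Proof.
move=> rM i j; apply: rational_ext (rational_mul (rational_cst ((-1) ^+ (j + i))) _) _.
  apply: (@rational_det _ (fun z => row' j (col' i (M z)))) => k l.
  by under eq_fun do rewrite !mxE; exact: rM.
by move=> z _; rewrite !mxE /cofactor.
Qed.

End RationalClosure.

Lemma rational_smooth_on_dom2 eps (F : R -> R -> R) : `[0, eps[ `<=` U ->
  rational_on (dom2 eps) (fun z => F z.1 z.2) -> smooth_on_dom2 eps F.
Proof.
move=> IcoU [e He]; exists [set z | U z.2 /\ defined_at e z]; split; first exact: open_defined.
split=> [z dz|]; first by split; [apply: IcoU; rewrite /= in_itv; case: dz|case: (He z dz)].
exists (rpartial e); split=> [z dz|i j z [Uz ez]]; last by case: (rpartial_spec i j Uz ez).
by case: z dz => x y dz; case: (He _ dz).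
Qed.

Lemma rational_smooth_on_Ico eps (f : R * R -> R) (g : R -> R) : `[0, eps[ `<=` U ->
  rational_on (dom2 eps) f -> (forall d, 0 <= d < eps -> f (0, d) = g d) -> smooth_on_Ico eps g.
Proof.
move=> IcoU [e He] fg.
exists [set d | U d /\ defined_at e (0, d)]; split.
  have -> : [set d | U d /\ defined_at e (0, d)] =
      (fun s => (0, s)) @^-1` [set z | U z.2 /\ defined_at e z] by [].
  by apply: open_comp; [move=> d _; exact: continuous_pair2|exact: open_defined].
split=> [d|].
  rewrite /= in_itv /= => dI; split; first by apply: IcoU; rewrite /= in_itv.
  by case: (He _ (dom2_0 dI)).
exists (fun n => rpartial e 0 n 0); split=> [d dI|n d [Ud ed]].
  by rewrite -fg //; case: (He _ (dom2_0 dI)).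
by case: (rpartial_spec 0 n (z := (0, d)) Ud ed).
Qed.

End RationalExpressions.

(** * Laplacians of rate matrices and Cramer's rule *)

Section FinMatrix.
Variables (R : fieldType) (T : finType).

Definition fmx (M : T -> T -> R) : 'M[R]_#|T| := \matrix_(i, j) M (enum_val i) (enum_val j).

Lemma sum_enum_val (F : T -> R) : \sum_(i < #|T|) F (enum_val i) = \sum_x F x.
Proof. by rewrite -big_enum_val. Qed.

Lemma sum_mul_delta (F : T -> R) y : \sum_x F x * (x == y)%:R = F y.
Proof. by rewrite (bigD1 y) //= eqxx mulr1 big1 ?addr0 // => x /negbTE ->; rewrite mulr0. Qed.

Lemma mulmx_fmx (M : T -> T -> R) (z : T -> R) j :
  ((\row_i z (enum_val i)) *m fmx M) 0 j = \sum_x z x * M x (enum_val j).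
Proof. by rewrite mxE -sum_enum_val; apply: eq_bigr => i _; rewrite !mxE. Qed.

Lemma det_fmx_neq0 (M : T -> T -> R) :
  (forall z : T -> R, (forall y, \sum_x z x * M x y = 0) -> forall x, z x = 0) ->
  \det (fmx M) != 0.
Proof.
move=> kerM; apply/negP => /det0P [v v_neq0 vM].
pose z x := v 0 (enum_rank x).
have v_row : v = \row_i z (enum_val i) by apply/rowP => i; rewrite mxE /z enum_valK.
have z0 : forall x, z x = 0.
  by apply: kerM => y; rewrite -[y]enum_rankK -mulmx_fmx -v_row vM mxE.
case/negP: v_neq0; apply/eqP/rowP => i.
by rewrite v_row !mxE z0.
Qed.

Lemma fmx_cramer (M : T -> T -> R) (z : T -> R) (c : R) (a : T) :
  (forall y, \sum_x z x * M x y = c * (y == a)%:R) ->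
  forall x, z x * \det (fmx M) = c * \adj (fmx M) (enum_rank a) (enum_rank x).
Proof.
move=> zM x.
have zM_row : (\row_i z (enum_val i)) *m fmx M = \row_j (c * (enum_val j == a)%:R).
  by apply/rowP => j; rewrite mulmx_fmx zM mxE.
have := congr1 (fun N => (N *m \adj (fmx M)) 0 (enum_rank x)) zM_row.
rewrite /= -mulmxA mul_mx_adj mul_mx_scalar !mxE enum_rankK mulrC => ->.
rewrite (bigD1 (enum_rank a)) //= big1 ?addr0 => [|j /negbTE j_neq].
  by rewrite !mxE enum_rankK eqxx mulr1.
by rewrite !mxE -(inj_eq enum_rank_inj) enum_valK j_neq mulr0 mul0r.
Qed.

Lemma sum_adj_fmx (M : T -> T -> R) (a y : T) :
  \sum_x \adj (fmx M) (enum_rank a) (enum_rank x) * M x y = \det (fmx M) * (y == a)%:R.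
Proof.
transitivity ((\adj (fmx M) *m fmx M) (enum_rank a) (enum_rank y)).
  by rewrite mxE -sum_enum_val; apply: eq_bigr => i _; rewrite !mxE !enum_rankK enum_valK.
by rewrite mul_adj_mx !mxE (inj_eq enum_rank_inj) eq_sym mulr_natr.
Qed.

End FinMatrix.

Section Laplacian.
Variables (R : realFieldType) (T : finType) (rate : T -> T -> R).
Hypothesis rate_ge0 : forall x y, x != y -> 0 <= rate x y.

Definition lap (x y : T) : R := if x == y then \sum_(w | w != x) rate x w else - rate x y.

Definition vlap (z : T -> R) (y : T) : R := \sum_x z x * lap x y.

Lemma lap_offdiag x y : x != y -> lap x y = - rate x y.
Proof. by rewrite /lap => /negbTE ->. Qed.

Lemma sum_lap_row x : \sum_y lap x y = 0.
Proof.
rewrite (bigD1 x) //= (eq_bigr (fun y => - rate x y)) => [|y yx].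
  by rewrite sumrN /lap eqxx subrr.
by rewrite lap_offdiag // eq_sym.
Qed.

Lemma sum_vlap z : \sum_y vlap z y = 0.
Proof.
by rewrite exchange_big big1 // => x _; rewrite -mulr_sumr sum_lap_row mulr0.
Qed.

Lemma vlapE z y :
  vlap z y = z y * \sum_(w | w != y) rate y w - \sum_(x | x != y) z x * rate x y.
Proof.
rewrite /vlap (bigD1 y) //= {1}/lap eqxx -sumrN; congr (_ + _).
by apply: eq_bigr => x xy; rewrite lap_offdiag // mulrN.
Qed.

Lemma vlapB (f g : T -> R) (s : R) y :
  vlap (fun x => f x - s * g x) y = vlap f y - s * vlap g y.
Proof. by rewrite /vlap mulr_sumr -sumrB; apply: eq_bigr => x _; ring. Qed.

(* [vlap z = 0] says [z] balances its inflow and outflow at each state; by the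
   triangle inequality [|z|] has no larger outflow than inflow anywhere, and
   since the total balance is zero, equality holds everywhere. *)
Lemma vlap_norm z : (forall y, vlap z y = 0) -> forall y, vlap (fun x => `|z x|) y = 0.
Proof.
move=> zK; have vlap_le0 y : vlap (fun x => `|z x|) y <= 0.
  have rate_sum_ge0 : 0 <= \sum_(w | w != y) rate y w.
    by apply: sumr_ge0 => w; rewrite eq_sym; exact: rate_ge0.
  move/eqP: (zK y); rewrite vlapE subr_eq0 => /eqP zy.
  rewrite vlapE subr_le0 -(ger0_norm rate_sum_ge0) -normrM zy.
  apply: le_trans (ler_norm_sum _ _ _) _.
  by apply: ler_sum => x xy; rewrite normrM (ger0_norm (rate_ge0 xy)).
have : \sum_y - vlap (fun x => `|z x|) y = 0 by rewrite sumrN sum_vlap oppr0.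
move=> /psumr_eq0P sum0 y; apply/eqP; rewrite -oppr_eq0; apply/eqP.
by apply: sum0 => // x _; rewrite oppr_ge0.
Qed.

Lemma vlap_support_closed (m : T -> R) : (forall x, 0 <= m x) -> (forall y, vlap m y = 0) ->
  forall x y, 0 < m x -> x != y -> 0 < rate x y -> 0 < m y.
Proof.
move=> m_ge0 mK x y mx xy rxy; rewrite lt_def m_ge0 andbT; apply/negP => /eqP my.
move: (mK y); rewrite vlapE my mul0r sub0r => /eqP; rewrite oppr_eq0 => /eqP sum0.
have terms_ge0 i : i != y -> 0 <= m i * rate i y by move=> iy; rewrite mulr_ge0 ?rate_ge0.
move: (psumr_eq0P terms_ge0 sum0 xy) => /eqP; rewrite mulf_eq0 => /orP [] /eqP E.
  by move: mx; rewrite E ltxx.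
by move: rxy; rewrite E ltxx.
Qed.

Definition reachable (a : T) := forall P : pred T,
  (forall x y, P x -> x != y -> 0 < rate x y -> P y) -> forall x, P x -> P a.

Lemma vlap_eq0_from (a : T) : reachable a -> forall m : T -> R,
  (forall x, 0 <= m x) -> (forall y, vlap m y = 0) -> m a = 0 -> forall x, m x = 0.
Proof.
move=> ra m m_ge0 mK ma x; apply/eqP; rewrite eq_le m_ge0 andbT leNgt; apply/negP => mx.
by move: (ra _ (vlap_support_closed m_ge0 mK) x mx); rewrite /= ma ltxx.
Qed.

Lemma vlap_sign (a : T) : reachable a -> forall z, (forall y, vlap z y = 0) ->
  exists2 s : R, s = 1 \/ s = -1 & forall x, `|z x| = s * z x.
Proof.
move=> ra z zK; pose s : R := if 0 <= z a then 1 else -1.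
have s_le x : s * z x <= `|z x|.
  by rewrite /s; case: ifP => _; rewrite ?mul1r ?mulN1r ?ler_norm // -normrN ler_norm.
exists s; first by rewrite /s; case: ifP; [left|right].
move=> x; apply/eqP; rewrite -subr_eq0; apply/eqP.
apply: (vlap_eq0_from ra (m := fun x => `|z x| - s * z x)) => [y|y|].
- by rewrite subr_ge0.
- by rewrite vlapB vlap_norm // zK mulr0 subr0.
- rewrite /s; case: ifP => za; rewrite ?mul1r ?mulN1r; first by rewrite ger0_norm // subrr.
  by rewrite ltr0_norm ?subrr // ltNge za.
Qed.

Variables (a : T) (w : T -> R).
Hypotheses (w_ge0 : forall x, 0 <= w x) (wa_gt0 : 0 < w a).

Definition wlap (x y : T) : R := if y == a then w x else lap x y.

Lemma vlap_of_wlap z : (forall y, y != a -> \sum_x z x * wlap x y = 0) ->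
  forall y, vlap z y = 0.
Proof.
move=> zW; have vlap_off y : y != a -> vlap z y = 0.
  by move=> ya; rewrite -(zW y ya); apply: eq_bigr => x _; rewrite /wlap (negbTE ya).
move=> y; case: (eqVneq y a) => [->|]; last exact: vlap_off.
by move: (sum_vlap z); rewrite (bigD1 a) //= big1 ?addr0.
Qed.

Lemma wlap_inj z : reachable a -> (forall y, \sum_x z x * wlap x y = 0) -> forall x, z x = 0.
Proof.
move=> ra zW; have zK := vlap_of_wlap (fun y _ => zW y).
have [s _ sE] := vlap_sign ra zK.
have sum_abs_w : \sum_x `|z x| * w x = 0.
  rewrite (eq_bigr (fun x => s * (z x * wlap x a))) => [|x _]; last by rewrite sE /wlap eqxx mulrA.
  by rewrite -mulr_sumr zW mulr0.
have za : `|z a| = 0.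
  have terms_ge0 x : true -> 0 <= `|z x| * w x by move=> _; rewrite mulr_ge0.
  move: (psumr_eq0P terms_ge0 sum_abs_w (i := a) isT) => /eqP.
  by rewrite mulf_eq0 (gt_eqF wa_gt0) orbF => /eqP.
move=> x; apply/eqP/normr0P.
exact: (vlap_eq0_from ra (m := fun x => `|z x|)) (vlap_norm zK) za x.
Qed.

Lemma wlap_mass_neq0 z (A : {pred T}) x0 : reachable a -> x0 \in A -> a != x0 -> 0 < rate a x0 ->
  (forall y, y != a -> \sum_x z x * wlap x y = 0) -> \sum_x z x * wlap x a = 1 ->
  \sum_(y in A) z y != 0.
Proof.
move=> ra Ax0 ax0 rax0 zW zWa; have zK := vlap_of_wlap zW.
have [s _ sE] := vlap_sign ra zK; have absK := vlap_norm zK.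
apply/negP => /eqP sumA0.
have zx0 : `|z x0| = 0.
  have sum_abs : \sum_(y in A) `|z y| = 0.
    by rewrite (eq_bigr (fun y => s * z y)) ?sE // -mulr_sumr sumA0 mulr0.
  exact: (psumr_eq0P (fun i _ => normr_ge0 (z i)) sum_abs Ax0).
have za : `|z a| = 0.
  apply/eqP; rewrite eq_le normr_ge0 andbT leNgt; apply/negP => za.
  by move: (vlap_support_closed (fun x => normr_ge0 (z x)) absK za ax0 rax0); rewrite zx0 ltxx.
move: zWa; rewrite big1 => [/eqP|x _]; first by rewrite eq_sym oner_eq0.
by have /normr0P/eqP -> := vlap_eq0_from ra (fun x => normr_ge0 (z x)) absK za x; rewrite mul0r.
Qed.

End Laplacian.

(** * The evolutionary Markov chain *)

Lemma closed_foldl (T : Type) (E : eqType) (P : pred T) (f : E -> T -> T) (s : seq E) :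
  (forall e x, e \in s -> P x -> P (f e x)) -> forall x, P x -> P (foldl (fun x e => f e x) x s).
Proof.
elim: s => [//|e s IH] f_closed x Px /=.
apply: IH => [e' y e's|]; last by apply: f_closed; rewrite ?mem_head.
by apply: f_closed; rewrite inE e's orbT.
Qed.

Section Chain.
Variables (G : finType) (R : realType) (nu : R).
Hypotheses (nu_gt0 : 0 < nu) (nu_lt1 : nu < 1).

Local Notation state := (state G).
Local Notation st_a := (st_a G).
Local Notation st_A := (st_A G).

Let zero_in01 : 0 <= (0 : R) <= 1.
Proof. by rewrite lexx ler01. Qed.

Lemma site_prob_ge0 (u : R) xi b : 0 <= u <= 1 -> 0 <= site_prob u nu xi b.
Proof.
case/andP => u_ge0 u_le1; rewrite /site_prob.
by rewrite !addr_ge0 // !mulr_ge0 // ?subr_ge0 // ltW.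
Qed.

Lemma site_prob_sum u xi : site_prob u nu xi true + site_prob u nu xi false = 1.
Proof. by rewrite /site_prob; case: xi => /=; ring. Qed.

Lemma site_prob_same_gt0 (u : R) b : 0 <= u <= 1 -> 0 < site_prob u nu b b.
Proof.
case/andP => u_ge0 u_le1; rewrite /site_prob eqxx.
have := nu_gt0; have := nu_lt1.
by case: b => /=; rewrite ?mulr1 ?mulr0 ?addr0 ?add0r; nra.
Qed.

Definition site_factor (u : R) (e : event G) (x y : state) (g : G) : R :=
  if e g is Some i then site_prob u nu (x i) (y g) else (x g == y g)%:R.

Lemma transE (r : rule G R) u x y :
  trans r u nu x y = \sum_e r e x * \prod_g site_factor u e x y g.
Proof. by []. Qed.

Lemma site_factor_ge0 (u : R) e x y g : 0 <= u <= 1 -> 0 <= site_factor u e x y g.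
Proof.
by move=> u01; rewrite /site_factor; case: (e g) => [i|]; [exact: site_prob_ge0|exact: ler0n].
Qed.

Definition monomorphic (x : state) := (x == st_a) || (x == st_A).

Lemma monomorphic_const x : monomorphic x -> forall i j, x i = x j.
Proof. by case/orP => /eqP -> i j; rewrite /st_a /st_A /ind !ffunE ?inE. Qed.

Lemma const_monomorphic (x : state) g : (forall h, x h = x g) -> monomorphic x.
Proof.
move=> x_const; rewrite /monomorphic; case xg: (x g); apply/orP; [right|left];
  by apply/eqP/ffunP => h; rewrite x_const xg /st_a /st_A /ind ffunE inE.
Qed.

Lemma not_monomorphic x : x != st_a -> x != st_A -> ~~ monomorphic x.
Proof. by rewrite /monomorphic negb_or => -> ->. Qed.

Lemma monomorphic_a : monomorphic st_a.
Proof. by rewrite /monomorphic eqxx. Qed.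

Lemma monomorphic_A : monomorphic st_A.
Proof. by rewrite /monomorphic eqxx orbT. Qed.

Section Rule.
Variable r : rule G R.
Hypotheses (r_ge0 : forall e x, 0 <= r e x) (r_sum : forall x, \sum_e r e x = 1).

Lemma trans_ge0 (u : R) x y : 0 <= u <= 1 -> 0 <= trans r u nu x y.
Proof.
move=> u01; apply: sumr_ge0 => e _; rewrite mulr_ge0 //.
by apply: prodr_ge0 => g _; exact: site_factor_ge0.
Qed.

Lemma trans_sum (u : R) x : \sum_y trans r u nu x y = 1.
Proof.
rewrite (eq_bigr (fun y => \sum_e r e x * \prod_g site_factor u e x y g)) // exchange_big /=.
rewrite -[RHS](r_sum x); apply: eq_bigr => e _; rewrite -mulr_sumr.
rewrite [X in _ * X](_ : _ = \prod_g \sum_(b : bool)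
    (if e g is Some i then site_prob u nu (x i) b else (x g == b)%:R)); last first.
  by rewrite bigA_distr_bigA.
rewrite big1 ?mulr1 // => g _; rewrite big_bool /=.
by case: (e g) => [i|]; [exact: site_prob_sum|case: (x g)]; rewrite /= ?addr0 ?add0r.
Qed.

Lemma trans_ge_term (u : R) x y e : 0 <= u <= 1 ->
  r e x * \prod_g site_factor u e x y g <= trans r u nu x y.
Proof.
move=> u01; rewrite transE (bigD1 e) //= lerDl; apply: sumr_ge0 => e' _.
by rewrite mulr_ge0 //; apply: prodr_ge0 => g _; exact: site_factor_ge0.
Qed.

(* Out of a monomorphic state only mutation changes the state, so the transition
   probabilities to other states are [u] times [mut_rate]: the factor [u] is
   taken out of the first site where the two states differ. *)
Definition mut_factor (e : event G) (y : state) (g : G) : R :=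
  if e g is Some _ then (if y g then nu else 1 - nu) else 0.

Definition mut_rate (u : R) (x y : state) : R :=
  if [pick g | x g != y g] is Some g0 then
    \sum_e r e x * \prod_g (if g == g0 then mut_factor e y g else site_factor u e x y g)
  else 0.

Lemma mut_factor_ge0 e y g : 0 <= mut_factor e y g.
Proof.
by rewrite /mut_factor; case: (e g) => // _; case: (y g); rewrite ?subr_ge0 ltW.
Qed.

Lemma mut_rate_ge0 (u : R) x y : 0 <= u <= 1 -> 0 <= mut_rate u x y.
Proof.
move=> u01; rewrite /mut_rate; case: pickP => // g0 _.
apply: sumr_ge0 => e _; rewrite mulr_ge0 //; apply: prodr_ge0 => g _.
by case: ifP => _; [exact: mut_factor_ge0|exact: site_factor_ge0].
Qed.

Lemma trans_monomorphic (u : R) x y : monomorphic x -> x != y ->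
  trans r u nu x y = u * mut_rate u x y.
Proof.
move=> mx xy; rewrite /mut_rate; case: pickP => [g0 xy_g0|xy_eq]; last first.
  by case/negP: xy; apply/eqP/ffunP => g; move/negbFE/eqP: (xy_eq g).
rewrite transE mulr_sumr; apply: eq_bigr => e _; rewrite mulrCA; congr (_ * _).
rewrite (bigD1 g0) //= [in RHS](bigD1 g0) //= eqxx mulrA; congr (_ * _); last first.
  by apply: eq_bigr => g /negbTE ->.
rewrite /site_factor /mut_factor; case: (e g0) => [i|]; last by rewrite (negbTE xy_g0) mulr0.
rewrite (monomorphic_const mx i g0) /site_prob.
by case: (x g0) xy_g0; case: (y g0) => //= _; ring.
Qed.

Lemma mut_rate_gt0 (u : R) (x y : state) g e : 0 <= u <= 1 -> monomorphic x ->
  (forall h, h != g -> x h = y h) -> x g != y g -> 0 < r e x -> e g != None ->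
  0 < mut_rate u x y.
Proof.
move=> u01 mx same diff re eg.
have pick_g : [pick g' | x g' != y g'] = Some g.
  case: pickP => [g' xy_g'|xy_eq]; last by move: (xy_eq g); rewrite diff.
  by case: (eqVneq g' g) => [->//|g'g]; move: xy_g'; rewrite same // eqxx.
rewrite /mut_rate pick_g (bigD1 e) //= ltr_wpDr //.
  apply: sumr_ge0 => e' _; rewrite mulr_ge0 //; apply: prodr_ge0 => h _.
  by case: ifP => _; [exact: mut_factor_ge0|exact: site_factor_ge0].
rewrite mulr_gt0 //; apply: prodr_gt0 => h _; case: ifP => [/eqP ->|/negbT hg].
  by rewrite /mut_factor; case: (e g) eg => // i _; case: (y g); rewrite ?subr_gt0.
rewrite /site_factor -(same h hg); case: (e h) => [i|]; last by rewrite eqxx ltr01.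
by rewrite (monomorphic_const mx i h); exact: site_prob_same_gt0.
Qed.

Definition rescaled_trans (u : R) (x y : state) : R :=
  if monomorphic x then mut_rate u x y else trans r u nu x y.

Lemma rescaled_trans_ge0 (u : R) x y : 0 <= u <= 1 -> 0 <= rescaled_trans u x y.
Proof.
by move=> u01; rewrite /rescaled_trans; case: ifP => _; [exact: mut_rate_ge0|exact: trans_ge0].
Qed.

Definition mutate0 (e : event G) (x : state) : state :=
  [ffun h => if e h is Some _ then false else x h].

Definition copy (e : event G) (x : state) : state := [ffun h => x (alpha_tilde e h)].

Lemma foldl_mutate0 s x h : foldl (fun x e => mutate0 e x) x s h =
  if has (fun e : event G => e h != None) s then false else x h.
Proof.
elim: s x => [//|e s IH] x /=; rewrite IH ffunE.
by case: (e h) => [i|] //=; case: ifP.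
Qed.

Lemma foldl_copy s x h : foldl (fun x e => copy e x) x s h = x (comp_tilde s h).
Proof. by elim: s x => [//|e s IH] x /=; rewrite IH ffunE. Qed.

Lemma copy_monomorphic e x : monomorphic x -> copy e x = x.
Proof. by move=> mx; apply/ffunP => h; rewrite ffunE; exact: monomorphic_const. Qed.

Lemma comp_tilde_replaces_all (s : seq (event G)) g e0 : e0 \in s -> g \in evR e0 ->
  (forall h, comp_tilde s h = g) -> forall h, has (fun e : event G => e h != None) s.
Proof.
move=> e0s ge0 s_fix h; apply/negPn/negP => /hasPn s_id.
have comp_h : comp_tilde s h = h.
  elim: s s_id {e0s s_fix} => [//|e s IH] s_id /=.
  rewrite IH => [|e' e's]; last by apply: s_id; rewrite inE e's orbT.
  by rewrite /alpha_tilde; move: (s_id e (mem_head _ _)); rewrite negbK => /eqP ->.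
move: ge0; rewrite inE -(s_fix h) comp_h.
by move: (s_id e0 e0s); rewrite negbK => /eqP ->.
Qed.

Lemma rescaled_trans_mutate0_gt0 (u : R) e x : 0 < u <= 1 -> 0 < r e x ->
  x != mutate0 e x -> 0 < rescaled_trans u x (mutate0 e x).
Proof.
case/andP => u_gt0 u_le1 re x_neq.
have u01 : 0 <= u <= 1 by rewrite ltW.
have trans_gt0 : 0 < trans r u nu x (mutate0 e x).
  apply: lt_le_trans (trans_ge_term _ _ e u01); rewrite mulr_gt0 //.
  apply: prodr_gt0 => g _; rewrite /site_factor ffunE.
  case: (e g) => [i|]; last by rewrite eqxx ltr01.
  rewrite /site_prob /= mulr0 addr0 mulr1 ltr_wpDl ?mulr_ge0 ?subr_ge0 //.
  by rewrite mulr_gt0 // subr_gt0.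
rewrite /rescaled_trans; case: ifP => // mx.
by move: trans_gt0; rewrite trans_monomorphic // pmulr_rgt0.
Qed.

Lemma trans0_copy_gt0 e x : 0 < r e x -> 0 < trans r 0 nu x (copy e x).
Proof.
move=> re; apply: lt_le_trans (trans_ge_term _ _ e zero_in01).
rewrite mulr_gt0 //; apply: prodr_gt0 => g _; rewrite /site_factor ffunE /alpha_tilde.
case: (e g) => [i|]; last by rewrite eqxx ltr01.
by rewrite /site_prob eqxx !mul0r subr0 !addr0 mulr1 ltr01.
Qed.

Hypothesis fix_ax : fixation_axiom r.

Lemma reachable_a_pos (u : R) : 0 < u <= 1 -> reachable (rescaled_trans u) st_a.
Proof.
move=> u01 P P_closed x Px.
have [g [s [_ [s_pos [[e0 e0s ge0] s_fix]]]]] := fix_ax.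
have <- : foldl (fun x e => mutate0 e x) x s = st_a.
  apply/ffunP => h; rewrite foldl_mutate0 (comp_tilde_replaces_all e0s ge0 s_fix).
  by rewrite /st_a /ind ffunE inE.
apply: (closed_foldl _ Px) => e y es Py.
case: (eqVneq y (mutate0 e y)) => [<-//|y_neq].
exact: P_closed Py y_neq (rescaled_trans_mutate0_gt0 u01 (s_pos e es y) y_neq).
Qed.

(* Without mutation, copying along the fixation sequence makes every state
   monomorphic; a single mutation then leads from [A] to a state from which the
   fixation sequence reaches [a]. *)
Lemma reachable_a0 : reachable (rescaled_trans 0) st_a.
Proof.
move=> P P_closed x Px.
have [g [s [_ [s_pos [[e0 e0s ge0] s_fix]]]]] := fix_ax.
have fixate y : P y -> P (if y g then st_A else st_a).
  move=> Py; have <- : foldl (fun x e => copy e x) y s = (if y g then st_A else st_a).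
    by apply/ffunP => h; rewrite foldl_copy s_fix; case: (y g); rewrite /st_a /st_A /ind !ffunE inE.
  apply: (closed_foldl _ Py) => e z es Pz.
  case: (eqVneq z (copy e z)) => [<-//|z_neq].
  have [mz|mz] := boolP (monomorphic z); first by rewrite copy_monomorphic.
  apply: P_closed Pz z_neq _.
  by rewrite /rescaled_trans (negbTE mz); exact: trans0_copy_gt0 (s_pos e es z).
move: (fixate x Px); case: (x g) => // PA.
pose y : state := [ffun h => h != g].
have yg : st_A g != y g by rewrite /y /st_A /ind !ffunE inE eqxx.
have Py : P y.
  apply: P_closed PA _ _; first by apply: contraNneq yg => ->.
  rewrite /rescaled_trans monomorphic_A.
  apply: (mut_rate_gt0 (g := g) (e := e0) zero_in01) => //.
  - exact: monomorphic_A.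
  - by move=> h hg; rewrite /y /st_A /ind !ffunE inE hg.
  - exact: s_pos.
  - by rewrite inE in ge0.
by move: (fixate y Py); rewrite ffunE eqxx.
Qed.

Lemma reachable_a (u : R) : 0 <= u <= 1 -> reachable (rescaled_trans u) st_a.
Proof.
case/andP => u_ge0 u_le1; have [u_gt0|u_le0] := ltrP 0 u.
  by apply: reachable_a_pos; rewrite u_gt0.
have -> : u = 0 by apply/eqP; rewrite eq_le u_le0.
exact: reachable_a0.
Qed.

Definition rweight (u : R) (x : state) : R := if monomorphic x then 1 else u.

Definition stationary_mx (u : R) : 'M[R]_#|state| :=
  fmx (wlap (rescaled_trans u) st_a (rweight u)).

Lemma rweight_ge0 (u : R) x : 0 <= u -> 0 <= rweight u x.
Proof. by rewrite /rweight; case: ifP. Qed.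

Lemma rweight_a (u : R) : rweight u st_a = 1.
Proof. by rewrite /rweight monomorphic_a. Qed.

Lemma stationary_mx_det_neq0 (u : R) : 0 <= u <= 1 -> \det (stationary_mx u) != 0.
Proof.
move=> u01; have u_ge0 : 0 <= u by case/andP: u01.
apply: det_fmx_neq0 => z; apply: (wlap_inj _ (w := rweight u)) (reachable_a u01).
- by move=> x y _; exact: rescaled_trans_ge0.
- by move=> x; exact: rweight_ge0.
- by rewrite rweight_a ltr01.
Qed.

(* Dividing the rows of the monomorphic states by [u] is compensated by
   multiplying [pi] by [u] there. *)
Lemma stationary_vlap (u : R) (pi : state -> R) : 0 < u -> stationary r u nu pi ->
  forall y, vlap (rescaled_trans u) (fun x => pi x * (if monomorphic x then u else 1)) y = 0.
Proof.
move=> u_gt0 [_ [_ pi_stat]] y.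
set sg := fun x => _.
have sg_trans x z : x != z -> sg x * rescaled_trans u x z = pi x * trans r u nu x z.
  move=> xz; rewrite /sg /rescaled_trans; case: ifP => mx; last by rewrite mulr1.
  by rewrite trans_monomorphic // mulrA.
have inflow : \sum_(x | x != y) sg x * rescaled_trans u x y =
                \sum_(x | x != y) pi x * trans r u nu x y.
  by apply: eq_bigr => x xy; exact: sg_trans.
have outflow : sg y * \sum_(w | w != y) rescaled_trans u y w =
               pi y * \sum_(w | w != y) trans r u nu y w.
  by rewrite !mulr_sumr; apply: eq_bigr => w yw; rewrite sg_trans // eq_sym.
have out_y : \sum_(w | w != y) trans r u nu y w = 1 - trans r u nu y y.
  by move: (trans_sum u y); rewrite (bigD1 y) //=; lra.
have in_y : \sum_(x | x != y) pi x * trans r u nu x y = pi y - pi y * trans r u nu y y.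
  by move: (pi_stat y); rewrite (bigD1 y) //=; lra.
by rewrite vlapE inflow outflow out_y in_y; ring.
Qed.

Lemma stationary_adj (u : R) (pi : state -> R) : 0 < u <= 1 -> stationary r u nu pi ->
  forall x, pi x = rweight u x * \adj (stationary_mx u) (enum_rank st_a) (enum_rank x) /
                   \det (stationary_mx u).
Proof.
move=> /andP [u_gt0 u_le1] pi_st x.
have det_neq0 : \det (stationary_mx u) != 0 by apply: stationary_mx_det_neq0; rewrite ltW.
have [_ [pi_sum _]] := pi_st.
pose sg x := pi x * (if monomorphic x then u else 1).
have sgW y : \sum_x sg x * wlap (rescaled_trans u) st_a (rweight u) x y = u * (y == st_a)%:R.
  rewrite /wlap; case: (eqVneq y st_a) => [_|ya]; last first.
    by rewrite mulr0; exact: (stationary_vlap u_gt0 pi_st y).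
  rewrite mulr1 -[u in RHS]mulr1 -pi_sum mulr_sumr; apply: eq_bigr => z _.
  by rewrite /sg /rweight; case: ifP; rewrite ?mulr1 ?mul1r // mulrC.
have cramer := fmx_cramer sgW x.
apply: (mulIf det_neq0); rewrite mulfVK //; rewrite /sg /rweight in cramer *.
case: ifP cramer => _ cramer; last by rewrite -cramer mulr1.
by apply: (mulfI (lt0r_neq0 u_gt0)); rewrite mul1r mulrA [u * _]mulrC cramer.
Qed.

Lemma polymorphic_adj_sum_neq0 (u : R) x0 : 0 <= u <= 1 -> ~~ monomorphic x0 ->
  \sum_(y | ~~ monomorphic y) \adj (stationary_mx u) (enum_rank st_a) (enum_rank y) != 0.
Proof.
move=> u01 x0_poly; have [g [s [_ [s_pos [[e0 e0s ge0] _]]]]] := fix_ax.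
have [h hg] : exists h, h != g.
  case: (pickP (fun h => x0 h != x0 g)) => [h x0h|x0_const]; last first.
    case/negP: x0_poly; apply: (const_monomorphic (g := g)) => h.
    by apply/eqP; rewrite -[_ == _]negbK x0_const.
  by exists h; apply: contraNneq x0h => ->.
pose y1 : state := [ffun h => h == g].
have y1_poly : ~~ monomorphic y1.
  rewrite /monomorphic negb_or; apply/andP; split; apply/eqP => /ffunP.
    by move/(_ g); rewrite /y1 /st_a /ind !ffunE inE eqxx.
  by move/(_ h); rewrite /y1 /st_A /ind !ffunE inE (negbTE hg).
have a_y1 : st_a != y1 by apply: contraNneq y1_poly => <-; exact: monomorphic_a.
have rate_a_y1 : 0 < rescaled_trans u st_a y1.
  rewrite /rescaled_trans monomorphic_a; apply: (mut_rate_gt0 (g := g) (e := e0)) => //.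
  - exact: monomorphic_a.
  - by move=> h' h'g; rewrite /y1 /st_a /ind !ffunE inE (negbTE h'g).
  - by rewrite /y1 /st_a /ind !ffunE inE eqxx.
  - exact: s_pos.
  - by rewrite inE in ge0.
have det_neq0 := stationary_mx_det_neq0 u01.
pose z y := \adj (stationary_mx u) (enum_rank st_a) (enum_rank y) / \det (stationary_mx u).
have zW y : \sum_x z x * wlap (rescaled_trans u) st_a (rweight u) x y = (y == st_a)%:R.
  under eq_bigr => x _ do rewrite mulrAC.
  by rewrite -mulr_suml sum_adj_fmx mulrAC divff // mul1r.
have mass_neq0 : \sum_(y in [pred y | ~~ monomorphic y]) z y != 0.
  apply: (wlap_mass_neq0 _ (w := rweight u) (reachable_a u01) _ a_y1 rate_a_y1).
  - by move=> x y _; exact: rescaled_trans_ge0.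
  - by [].
  - by move=> y ya; rewrite zW (negbTE ya).
  - by rewrite zW eqxx.
apply: contra mass_neq0 => /eqP sum0.
by rewrite -mulr_suml sum0 mul0r.
Qed.

Lemma a_neq_A : st_a != st_A.
Proof.
have [g _] := fix_ax.
by apply/eqP => /ffunP /(_ g); rewrite /st_a /st_A /ind !ffunE !inE.
Qed.

Lemma conditional_stationary_adj (u : R) (pi : state -> R) x : 0 < u <= 1 ->
  stationary r u nu pi -> ~~ monomorphic x ->
  pi x / (1 - pi st_a - pi st_A) =
  \adj (stationary_mx u) (enum_rank st_a) (enum_rank x) /
    \sum_(y | ~~ monomorphic y) \adj (stationary_mx u) (enum_rank st_a) (enum_rank y).
Proof.
move=> u01 pi_st x_poly; have u01' : 0 <= u <= 1 by case/andP: u01 => /ltW -> ->.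
have [u_gt0 _] := andP u01; have [_ [pi_sum _]] := pi_st.
have poly_mass : 1 - pi st_a - pi st_A = \sum_(y | ~~ monomorphic y) pi y.
  rewrite -pi_sum (bigD1 st_a) //= (bigD1 st_A) /=; last by rewrite eq_sym a_neq_A.
  rewrite (eq_bigl (fun y => ~~ monomorphic y)); first by ring.
  by move=> y; rewrite /monomorphic negb_or andbC.
rewrite poly_mass (stationary_adj u01 pi_st x) /rweight (negbTE x_poly).
rewrite (eq_bigr (fun y =>
  u / \det (stationary_mx u) * \adj (stationary_mx u) (enum_rank st_a) (enum_rank y))); last first.
  move=> y y_poly; rewrite (stationary_adj u01 pi_st y) /rweight (negbTE y_poly).
  by rewrite mulrAC mulrC mulrA.
rewrite -mulr_sumr; field.
by rewrite (polymorphic_adj_sum_neq0 u01' x_poly) stationary_mx_det_neq0 // gt_eqF.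
Qed.

Lemma trans0_monomorphic c y : monomorphic c -> trans r 0 nu c y = (c == y)%:R.
Proof.
move=> mc; case: (eqVneq c y) => [<-|cy]; last by rewrite trans_monomorphic // mul0r.
move: (trans_sum 0 c); rewrite (bigD1 c) //= big1 ?addr0 // => z zc.
by rewrite trans_monomorphic 1?eq_sym ?mul0r.
Qed.

Lemma absorbed (P : pred state) :
  (forall x y, P x -> ~~ monomorphic x -> 0 < trans r 0 nu x y -> P y) ->
  forall x, P x -> exists2 c, monomorphic c & P c.
Proof.
move=> P_closed x Px; have [g [s [_ [s_pos [_ s_fix]]]]] := fix_ax.
pose Q y := P y || [exists c, monomorphic c && P c].
have : Q (foldl (fun x e => copy e x) x s).
  apply: (closed_foldl (P := Q) (f := copy)); last by rewrite /Q Px.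
  move=> e y es /orP [Py|]; last by rewrite /Q orbC => ->.
  have [my|my] := boolP (monomorphic y).
    by apply/orP; right; apply/existsP; exists y; rewrite my Py.
  case: (eqVneq y (copy e y)) => [<-|y_neq]; first by rewrite /Q Py.
  by rewrite /Q (P_closed _ _ Py my (trans0_copy_gt0 (s_pos e es y))).
case/orP => [Pfin|/existsP [c /andP [mc Pc]]]; last by exists c.
exists (foldl (fun x e => copy e x) x s) => //.
by apply: (const_monomorphic (g := g)) => h; rewrite !foldl_copy !s_fix.
Qed.

(* Maximum principle: the states where [f] is maximal are closed under
   transitions out of polymorphic states, hence include a monomorphic one. *)
Lemma harmonic_le0 (f : state -> R) : (forall x, monomorphic x -> f x = 0) ->
  (forall x, ~~ monomorphic x -> f x = \sum_y trans r 0 nu x y * f y) -> forall x, f x <= 0.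
Proof.
move=> f_mono f_harm; have [xm _ xm_max] := arg_maxP f (isT : predT st_a).
suff : f xm <= 0 by move=> fxm x; apply: le_trans fxm; exact: xm_max.
rewrite leNgt; apply/negP => fxm_gt0.
have max_closed x y : f x == f xm -> ~~ monomorphic x -> 0 < trans r 0 nu x y -> f y == f xm.
  move=> /eqP fx mx xy.
  have sum0 : \sum_z trans r 0 nu x z * (f xm - f z) = 0.
    under eq_bigr => z _ do rewrite mulrBr.
    by rewrite sumrB -mulr_suml trans_sum mul1r -f_harm // fx subrr.
  have terms_ge0 z : true -> 0 <= trans r 0 nu x z * (f xm - f z).
    move=> _; rewrite mulr_ge0 ?subr_ge0 //; last exact: xm_max.
    exact: trans_ge0.
  move: (psumr_eq0P terms_ge0 sum0 (i := y) isT) => /eqP.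
  by rewrite mulf_eq0 gt_eqF //= subr_eq0 eq_sym.
have [c mc /eqP fc] := absorbed max_closed (eqxx (f xm)).
by move: fxm_gt0; rewrite -fc f_mono // ltxx.
Qed.

Lemma harmonic_eq0 (f : state -> R) : (forall x, monomorphic x -> f x = 0) ->
  (forall x, ~~ monomorphic x -> f x = \sum_y trans r 0 nu x y * f y) -> forall x, f x = 0.
Proof.
move=> f_mono f_harm x; apply/eqP; rewrite eq_le harmonic_le0 //= -oppr_le0.
apply: (harmonic_le0 (f := fun x => - f x)) => [y my|y my]; first by rewrite f_mono ?oppr0.
by rewrite f_harm // -sumrN; apply: eq_bigr => z _; rewrite mulrN.
Qed.

(* Transposed fundamental matrix of the chain at [u = 0]: its left null vectors
   are the functions that are harmonic off, and vanish on, the monomorphic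
   states. *)
Definition absorb_mx : 'M[R]_#|state| :=
  fmx (fun y x => (x == y)%:R - (if monomorphic x then 0 else trans r 0 nu x y)).

Lemma sum_absorb_mx (f : state -> R) x :
  \sum_y f y * ((x == y)%:R - (if monomorphic x then 0 else trans r 0 nu x y)) =
  f x - (if monomorphic x then 0 else \sum_y trans r 0 nu x y * f y).
Proof.
under eq_bigr => y _ do rewrite mulrBr eq_sym.
rewrite sumrB sum_mul_delta; case: ifP => _; first by rewrite big1 // => y _; rewrite mulr0.
by congr (_ - _); apply: eq_bigr => y _; rewrite mulrC.
Qed.

Lemma absorb_mx_det_neq0 : \det absorb_mx != 0.
Proof.
apply: det_fmx_neq0 => f f_null; apply: harmonic_eq0 => x mx; move/eqP: (f_null x);
  by rewrite sum_absorb_mx ?mx ?(negbTE mx) subr_eq0 => /eqP.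
Qed.

Lemma trans_tS (u : R) t x y :
  trans_t r u nu t.+1 x y = \sum_z trans_t r u nu t x z * trans r u nu z y.
Proof. by []. Qed.

Lemma trans_tSl (u : R) t x y :
  trans_t r u nu t.+1 x y = \sum_z trans r u nu x z * trans_t r u nu t z y.
Proof.
elim: t x y => [|t IH] x y.
  rewrite /= sum_mul_delta (eq_bigr (fun z => trans r u nu z y * (z == x)%:R)) ?sum_mul_delta //.
  by move=> z _; rewrite mulrC eq_sym.
rewrite trans_tS (eq_bigr (fun w =>
  \sum_z trans r u nu x z * trans_t r u nu t z w * trans r u nu w y)); last first.
  by move=> w _; rewrite IH mulr_suml.
rewrite exchange_big; apply: eq_bigr => z _.
by rewrite trans_tS mulr_sumr; apply: eq_bigr => w _; rewrite mulrA.
Qed.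

Lemma trans_t_ge0 (u : R) t x y : 0 <= u <= 1 -> 0 <= trans_t r u nu t x y.
Proof.
move=> u01; elim: t x y => [|t IH] x y /=; first exact: ler0n.
by apply: sumr_ge0 => z _; rewrite mulr_ge0 ?trans_ge0.
Qed.

Lemma trans_t_sum (u : R) t x : \sum_y trans_t r u nu t x y = 1.
Proof.
elim: t x => [|t IH] x.
  by rewrite (eq_bigr (fun y => 1 * (y == x)%:R)) ?sum_mul_delta // => y _; rewrite mul1r eq_sym.
rewrite (eq_bigr (fun y => \sum_z trans_t r u nu t x z * trans r u nu z y)) // exchange_big /=.
by rewrite -[RHS](IH x); apply: eq_bigr => z _; rewrite -mulr_sumr trans_sum mulr1.
Qed.

Lemma trans_t0_monomorphic t c y : monomorphic c -> trans_t r 0 nu t c y = (c == y)%:R.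
Proof.
move=> mc; elim: t => [//|t IH]; rewrite trans_tSl.
rewrite (eq_bigr (fun z => trans_t r 0 nu t z y * (z == c)%:R)) ?sum_mul_delta //.
by move=> z _; rewrite trans0_monomorphic // mulrC eq_sym.
Qed.

Lemma trans_t0_nondecreasing c x : monomorphic c ->
  nondecreasing_seq (fun t => trans_t r 0 nu t x c).
Proof.
move=> mc; apply/nondecreasing_seqP => t; rewrite trans_tS (bigD1 c) //=.
rewrite trans0_monomorphic // eqxx mulr1 lerDl; apply: sumr_ge0 => z _.
by rewrite mulr_ge0 ?trans_t_ge0 ?trans_ge0.
Qed.

Lemma trans_t_le1 (u : R) t x y : 0 <= u <= 1 -> trans_t r u nu t x y <= 1.
Proof.
move=> u01; rewrite -(trans_t_sum u t x) (bigD1 y) //= lerDl.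
by apply: sumr_ge0 => z _; exact: trans_t_ge0.
Qed.

Definition absorb_prob (c x : state) : R := limn (fun t => trans_t r 0 nu t x c).

Lemma absorb_prob_cvg c x : monomorphic c ->
  (fun t => trans_t r 0 nu t x c) @ \oo --> absorb_prob c x.
Proof.
move=> mc; have cvg_sup := nondecreasing_cvgn (trans_t0_nondecreasing x mc).
have /cvg_sup sup_lim : has_ubound (range (fun t => trans_t r 0 nu t x c)).
  by exists 1 => _ [t _ <-]; exact: trans_t_le1.
by rewrite /absorb_prob (cvg_lim _ sup_lim).
Qed.

Lemma absorb_prob_harmonic c x : monomorphic c ->
  absorb_prob c x = \sum_z trans r 0 nu x z * absorb_prob c z.
Proof.
move=> mc; have : (fun t => trans_t r 0 nu t.+1 x c) @ \oo --> absorb_prob c x.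
  by rewrite (cvg_shiftS (fun t => trans_t r 0 nu t x c)); exact: absorb_prob_cvg.
under eq_fun do rewrite trans_tSl.
move=> cvg_l.
have cvg_r : (fun t => \sum_z trans r 0 nu x z * trans_t r 0 nu t z c) @ \oo -->
             \sum_z trans r 0 nu x z * absorb_prob c z.
  apply: cvg_big => [|z _]; first exact: add_continuous.
  by apply: cvgMr; exact: absorb_prob_cvg.
exact: cvg_unique cvg_l cvg_r.
Qed.

Lemma absorb_prob_monomorphic c x : monomorphic c -> monomorphic x ->
  absorb_prob c x = (x == c)%:R.
Proof.
move=> mc mx; rewrite /absorb_prob.
by under eq_fun do rewrite trans_t0_monomorphic //; exact: lim_cst.
Qed.

Lemma absorb_prob_adj c x : monomorphic c ->
  absorb_prob c x * \det absorb_mx = \adj absorb_mx (enum_rank c) (enum_rank x).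
Proof.
move=> mc; rewrite -[RHS]mul1r; apply: fmx_cramer => {}x.
rewrite sum_absorb_mx mul1r; case: ifP => mx; first by rewrite subr0 absorb_prob_monomorphic.
rewrite -absorb_prob_harmonic // subrr; case: eqP => // xc.
by move: mx; rewrite xc mc.
Qed.

Lemma rho_A_adj : rho_A r nu =
  \sum_x mu_A r x * (\adj absorb_mx (enum_rank st_A) (enum_rank x) / \det absorb_mx).
Proof.
apply: eq_bigr => x _; congr (_ * _); apply: (mulIf absorb_mx_det_neq0).
by rewrite mulfVK ?absorb_mx_det_neq0 // -absorb_prob_adj // monomorphic_A.
Qed.

Lemma rho_a_adj : rho_a r nu =
  \sum_x mu_a r x * (\adj absorb_mx (enum_rank st_a) (enum_rank x) / \det absorb_mx).
Proof.
apply: eq_bigr => x _; congr (_ * _); apply: (mulIf absorb_mx_det_neq0).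
by rewrite mulfVK ?absorb_mx_det_neq0 // -absorb_prob_adj // monomorphic_a.
Qed.

Lemma b_tot_gt0 x : 0 < b_tot r x.
Proof.
have [g [s [_ [s_pos [[e0 e0s ge0] _]]]]] := fix_ax.
rewrite inE in ge0; case e0g: (e0 g) ge0 => [g'|] // _.
rewrite /b_tot (bigD1 g') //= ltr_wpDr //; first by do 3!(apply: sumr_ge0 => ? _).
rewrite /b_g (bigD1 g) //= ltr_wpDr //; first by do 2!(apply: sumr_ge0 => ? _).
rewrite /e_gh (bigD1 e0) /= ?e0g // ltr_wpDr ?s_pos //.
exact: sumr_ge0.
Qed.

End Rule.
End Chain.

(** * Smooth extensions and the proof of Proposition 4 *)

Section SmoothExtension.
Variables (R : realType) (eps : R).

Lemma extension_cvg0 (f F : R -> R -> R) (d : R) : smooth_on_dom2 eps F ->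
  (forall u d, 0 < u <= 1 -> 0 <= d < eps -> F u d = f u d) -> 0 <= d < eps ->
  f u d @[u --> 0^'+] --> F 0 d.
Proof.
move=> [U [_ [domU [D [D_F D_spec]]]]] Ff dI; have dom0 := dom2_0 dI.
have [_ [_ D_cont]] := D_spec 0%N 0%N (0, d) (domU _ dom0).
have D_cont_u : {for 0, continuous (fun u => D 0%N 0%N u d)}.
  apply: (continuous_comp (f := fun u => (u, d)) (g := fun q => D 0%N 0%N q.1 q.2)) D_cont.
  exact: continuous_pair1.
rewrite -(D_F _ dom0); apply: cvg_trans (cvg_at_right_filter D_cont_u); apply: near_eq_cvg.
near=> u; have u_gt0 : 0 < u by near: u; exact: nbhs_right_gt.
have u_le1 : u <= 1 by near: u; exact: nbhs_right_le ltr01.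
rewrite (D_F (u, d)) ?Ff ?u_gt0 //.
by split; [rewrite u_le1 andbT ltW|case: dom0].
Unshelve. all: by end_near.
Qed.

Lemma extends_uniquely_smooth_intro (f F : R -> R -> R) : smooth_on_dom2 eps F ->
  (forall u d, 0 < u <= 1 -> 0 <= d < eps -> F u d = f u d) -> extends_uniquely_smooth eps f.
Proof.
move=> sF Ff; split; first by exists F.
move=> F1 F2 sF1 F1f sF2 F2f [u d] [/= /andP [u_ge0 u_le1] dI].
have [u_gt0|u_le0] := ltrP 0 u; first by rewrite F1f ?F2f ?u_gt0.
have -> : u = 0 by apply/eqP; rewrite eq_le u_le0.
exact: cvg_unique (extension_cvg0 sF1 F1f dI) (extension_cvg0 sF2 F2f dI).
Qed.

End SmoothExtension.

Lemma smooth_on_Ico_chart (R : realType) (K : finType) (eps : R) (f : K -> R -> R) :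
  (forall k, smooth_on_Ico eps (f k)) ->
  exists fam : K -> nat -> R -> R, exists U : set R,
    [/\ open U, `[0, eps[ `<=` U,
        forall k n y, U y -> is_derive y 1 (fam k n) (fam k n.+1 y) &
        forall k d, 0 <= d < eps -> fam k 0%N d = f k d].
Proof.
move=> f_smooth.
have : forall k, exists UD : set R * (nat -> R -> R),
    [/\ open UD.1, `[0, eps[ `<=` UD.1,
        forall n y, UD.1 y -> is_derive y 1 (UD.2 n) (UD.2 n.+1 y) &
        forall d, 0 <= d < eps -> UD.2 0%N d = f k d].
  by move=> k; have [U [U_open [IcoU [D [D_f D_der]]]]] := f_smooth k; exists (U, D).
case/choice => UD UD_spec.
exists (fun k => (UD k).2), [set y | forall k, (UD k).1 y]; split.
- rewrite openE => y Uy; apply: (@filter_forall _ _ (fun k => (UD k).1) _ (nbhs_filter y)) => k.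
  by have [U_open _ _ _] := UD_spec k; exact: U_open.
- by move=> y Iy k; have [_ IcoU _ _] := UD_spec k; exact: IcoU.
- by move=> k n y Uy; have [_ _ D_der _] := UD_spec k; exact: D_der.
- by move=> k d dI; have [_ _ _ D_f] := UD_spec k; exact: D_f.
Qed.

Section ChainRational.
Variables (G : finType) (R : realType) (nu : R).
Variables (fam : event G * state G -> nat -> R -> R) (D : set (R * R)).

Local Notation state := (state G).
Local Notation rational := (rational_on fam D).

Definition rule_at (d : R) : rule G R := fun e x => fam (e, x) 0%N d.

Lemma rational_rule e x : rational (fun z => rule_at z.2 e x).
Proof. exact: (rational_atom fam D (e, x)). Qed.

Lemma rational_site_factor (uf : R * R -> R) e (x y : state) g : rational uf ->
  rational (fun z => site_factor nu (uf z) e x y g).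
Proof.
move=> r_uf; rewrite /site_factor; case: (e g) => [i|]; last exact: rational_cst.
have r_cst c : rational (fun=> c) := rational_cst fam D c.
rewrite /site_prob; apply: rational_add; first apply: rational_add.
- by apply: rational_mul (rational_sub (r_cst 1) r_uf) (r_cst _).
- by apply: rational_mul (rational_mul r_uf (r_cst _)) (r_cst _).
- by apply: rational_mul (rational_mul r_uf (r_cst _)) (r_cst _).
Qed.

Lemma rational_trans (uf : R * R -> R) (x y : state) : rational uf ->
  rational (fun z => trans (rule_at z.2) (uf z) nu x y).
Proof.
move=> r_uf; apply: rational_sum => e _; apply: rational_mul; first exact: rational_rule.
by apply: rational_prod => g _; exact: rational_site_factor.
Qed.

Lemma rational_rescaled_trans (x y : state) :
  rational (fun z => rescaled_trans nu (rule_at z.2) z.1 x y).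
Proof.
have r_u := rational_fst fam D; rewrite /rescaled_trans.
case: (monomorphic x); last exact: rational_trans.
rewrite /mut_rate; case: pickP => [g0 _|_]; last exact: rational_cst.
apply: rational_sum => e _; apply: rational_mul; first exact: rational_rule.
apply: rational_prod => g _; case: (g == g0); [exact: rational_cst|exact: rational_site_factor].
Qed.

Lemma rational_stationary_mx i j : rational (fun z => stationary_mx nu (rule_at z.2) z.1 i j).
Proof.
have r_wlap (x y : state) :
    rational (fun z => wlap (rescaled_trans nu (rule_at z.2) z.1) (st_a G) (rweight z.1) x y).
  rewrite /wlap /lap /rweight; case: (y == st_a G).
    by case: (monomorphic x); [exact: rational_cst|exact: rational_fst].
  case: (x == y); last exact: rational_opp (rational_rescaled_trans _ _).
  by apply: rational_sum => w _; exact: rational_rescaled_trans.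
by apply: rational_ext (r_wlap (enum_val i) (enum_val j)) _ => z _; rewrite mxE.
Qed.

Lemma rational_absorb_mx i j : rational (fun z => absorb_mx nu (rule_at z.2) i j).
Proof.
apply: rational_ext (rational_sub (rational_cst _ _ _) _) _ => [|z _]; last by rewrite mxE.
by case: (monomorphic _); [exact: rational_cst|exact: rational_trans (rational_cst _ _ 0)].
Qed.

Lemma rational_b_tot (x : state) : rational (fun z => b_tot (rule_at z.2) x).
Proof. by do 3!(apply: rational_sum => ? _); exact: rational_rule. Qed.

Lemma rational_mu_A (x : state) : (forall z, D z -> b_tot (rule_at z.2) (st_a G) != 0) ->
  rational (fun z => mu_A (rule_at z.2) x).
Proof.
move=> b_neq0; apply: rational_sum => g _; apply: rational_mul; first exact: rational_cst.
apply: rational_div (rational_b_tot _) b_neq0.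
by do 2!(apply: rational_sum => ? _); exact: rational_rule.
Qed.

Lemma rational_mu_a (x : state) : (forall z, D z -> b_tot (rule_at z.2) (st_A G) != 0) ->
  rational (fun z => mu_a (rule_at z.2) x).
Proof.
move=> b_neq0; apply: rational_sum => g _; apply: rational_mul; first exact: rational_cst.
apply: rational_div (rational_b_tot _) b_neq0.
by do 2!(apply: rational_sum => ? _); exact: rational_rule.
Qed.

Lemma rational_rweight (x : state) : rational (fun z => rweight z.1 x).
Proof. by rewrite /rweight; case: (monomorphic x); [exact: rational_cst|exact: rational_fst]. Qed.

End ChainRational.

Section Proposition4.
Variables (G : finType) (R : realType) (eps nu : R).
Variables (p : R -> rule G R) (pi : R -> R -> state G -> R).
Hypotheses (nu_gt0 : 0 < nu) (nu_lt1 : nu < 1).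
Hypothesis p_rule : forall d, 0 <= d < eps -> is_rule (p d).
Hypothesis p_fix : forall d, 0 <= d < eps -> fixation_axiom (p d).
Hypothesis pi_stat : forall d u, 0 <= d < eps -> 0 < u <= 1 -> stationary (p d) u nu (pi d u).
Variables (fam : event G * state G -> nat -> R -> R) (U : set R).
Hypotheses (U_open : open U) (Ico_U : `[0, eps[ `<=` U).
Hypothesis fam_derive : forall k n y, U y -> is_derive y 1 (fam k n) (fam k n.+1 y).
Hypothesis fam_p : forall e x d, 0 <= d < eps -> fam (e, x) 0%N d = p d e x.

Local Notation state := (state G).
Local Notation q := (rule_at fam).
Local Notation rational := (rational_on fam (dom2 eps)).

Let p_ge0 (d : R) : 0 <= d < eps -> forall e x, 0 <= p d e x.
Proof. by move=> dI e x; case: (p_rule dI x) => + _; apply. Qed.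

Let p_sum (d : R) : 0 <= d < eps -> forall x, \sum_e p d e x = 1.
Proof. by move=> dI x; case: (p_rule dI x). Qed.

Let smooth_dom2 (F : R -> R -> R) : rational (fun z => F z.1 z.2) -> smooth_on_dom2 eps F.
Proof. exact: rational_smooth_on_dom2. Qed.

Let smooth_Ico (f : R * R -> R) (g : R -> R) : rational f ->
  (forall d, 0 <= d < eps -> f (0, d) = g d) -> smooth_on_Ico eps g.
Proof. exact: rational_smooth_on_Ico. Qed.

Lemma rule_at_p (d : R) : 0 <= d < eps -> q d = p d.
Proof. by move=> dI; apply/funext => e; apply/funext => x; exact: fam_p. Qed.

Lemma stationary_mx_det_dom2 z : dom2 eps z -> \det (stationary_mx nu (q z.2) z.1) != 0.
Proof.
case: z => u d [/= u01 dI]; rewrite rule_at_p //.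
by have := stationary_mx_det_neq0 nu_gt0 nu_lt1 (p_ge0 dI) (p_fix dI) u01.
Qed.

Definition pi_ext (x : state) (u d : R) : R :=
  rweight u x * \adj (stationary_mx nu (q d) u) (enum_rank (st_a G)) (enum_rank x) /
  \det (stationary_mx nu (q d) u).

Lemma pi_ext_smooth x : smooth_on_dom2 eps (pi_ext x).
Proof.
apply: smooth_dom2; apply: rational_div stationary_mx_det_dom2.
- apply: rational_mul; first exact: rational_rweight.
  by apply: rational_adj => i j; exact: rational_stationary_mx.
- by apply: rational_det => i j; exact: rational_stationary_mx.
Qed.

Lemma pi_extE x u d : 0 < u <= 1 -> 0 <= d < eps -> pi_ext x u d = pi d u x.
Proof.
move=> u01 dI; rewrite /pi_ext rule_at_p //.
by rewrite -(stationary_adj nu_gt0 nu_lt1 (p_ge0 dI) (p_sum dI) (p_fix dI) u01 (pi_stat dI u01)).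
Qed.

Lemma pi_extends_smooth x : extends_uniquely_smooth eps (fun u d => pi d u x).
Proof. exact: extends_uniquely_smooth_intro (pi_ext_smooth x) (@pi_extE x). Qed.

Definition cond_pi_ext (x : state) (u d : R) : R :=
  \adj (stationary_mx nu (q d) u) (enum_rank (st_a G)) (enum_rank x) /
  \sum_(y | ~~ monomorphic y) \adj (stationary_mx nu (q d) u) (enum_rank (st_a G)) (enum_rank y).

Lemma rational_cond_pi_ext x : ~~ monomorphic x -> rational (fun z => cond_pi_ext x z.1 z.2).
Proof.
move=> x_poly; apply: rational_div => [||[u d] [/= u01 dI]].
- by apply: rational_adj => i j; exact: rational_stationary_mx.
- by apply: rational_sum => y _; apply: rational_adj => i j; exact: rational_stationary_mx.
- rewrite rule_at_p //.
  by have := polymorphic_adj_sum_neq0 nu_gt0 nu_lt1 (p_ge0 dI) (p_fix dI) u01 x_poly.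
Qed.

Lemma cond_pi_extE x : ~~ monomorphic x -> forall u d, 0 < u <= 1 -> 0 <= d < eps ->
  cond_pi_ext x u d = pi d u x / (1 - pi d u (st_a G) - pi d u (st_A G)).
Proof.
move=> x_poly u d u01 dI; rewrite /cond_pi_ext rule_at_p //.
have p_ge0d := p_ge0 dI; have p_sumd := p_sum dI; have p_fixd := p_fix dI.
by rewrite (conditional_stationary_adj nu_gt0 nu_lt1 p_ge0d p_sumd p_fixd u01 (pi_stat dI u01)).
Qed.

Lemma pi_cond_extends_smooth x : x != st_a G -> x != st_A G -> extends_uniquely_smooth eps
  (fun u d => pi d u x / (1 - pi d u (st_a G) - pi d u (st_A G))).
Proof.
move=> xa xA; have x_poly := not_monomorphic xa xA.
apply: (extends_uniquely_smooth_intro _ (cond_pi_extE x_poly)).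
exact: smooth_dom2 (rational_cond_pi_ext x_poly).
Qed.

Lemma pi_RMC_smooth x : x != st_a G -> x != st_A G ->
  exists f : R -> R, smooth_on_Ico eps f /\ forall d, 0 <= d < eps ->
    (pi d u x / (1 - pi d u (st_a G) - pi d u (st_A G))) @[u --> 0^'+] --> f d.
Proof.
move=> xa xA; have x_poly := not_monomorphic xa xA.
have r_ext := rational_cond_pi_ext x_poly.
exists (cond_pi_ext x 0); split; first by apply: (smooth_Ico r_ext).
by move=> d dI; exact: extension_cvg0 (smooth_dom2 r_ext) (cond_pi_extE x_poly) dI.
Qed.

Lemma absorb_mx_det_dom2 z : dom2 eps z -> \det (absorb_mx nu (q z.2)) != 0.
Proof.
case: z => u d [_ /= dI]; rewrite rule_at_p //.
by have := absorb_mx_det_neq0 nu_gt0 nu_lt1 (p_ge0 dI) (p_sum dI) (p_fix dI).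
Qed.

Lemma b_tot_dom2 z x : dom2 eps z -> b_tot (q z.2) x != 0.
Proof.
case: z => u d [_ /= dI]; rewrite rule_at_p //.
by rewrite gt_eqF // (b_tot_gt0 (p_ge0 dI) (p_fix dI)).
Qed.

Lemma rational_absorb_adj c x :
  rational (fun z => \adj (absorb_mx nu (q z.2)) c x / \det (absorb_mx nu (q z.2))).
Proof.
apply: rational_div absorb_mx_det_dom2.
  by apply: rational_adj => i j; exact: rational_absorb_mx.
by apply: rational_det => i j; exact: rational_absorb_mx.
Qed.

Lemma rho_A_smooth : smooth_on_Ico eps (fun d => rho_A (p d) nu).
Proof.
apply: (smooth_Ico (f := fun z =>
  \sum_x mu_A (q z.2) x * (\adj (absorb_mx nu (q z.2)) (enum_rank (st_A G)) (enum_rank x) /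
                           \det (absorb_mx nu (q z.2))))) => [|d dI].
  apply: rational_sum => x _; apply: rational_mul (rational_absorb_adj _ _).
  by apply: rational_mu_A => z /b_tot_dom2.
by rewrite /= rule_at_p // (rho_A_adj nu_gt0 nu_lt1 (p_ge0 dI) (p_sum dI) (p_fix dI)).
Qed.

Lemma rho_a_smooth : smooth_on_Ico eps (fun d => rho_a (p d) nu).
Proof.
apply: (smooth_Ico (f := fun z =>
  \sum_x mu_a (q z.2) x * (\adj (absorb_mx nu (q z.2)) (enum_rank (st_a G)) (enum_rank x) /
                           \det (absorb_mx nu (q z.2))))) => [|d dI].
  apply: rational_sum => x _; apply: rational_mul (rational_absorb_adj _ _).
  by apply: rational_mu_a => z /b_tot_dom2.
by rewrite /= rule_at_p // (rho_a_adj nu_gt0 nu_lt1 (p_ge0 dI) (p_sum dI) (p_fix dI)).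
Qed.

End Proposition4.

Theorem proposition4 (G : finType) (R : realType) (eps nu : R)
  (p : R -> rule G R)
  (pi : R -> R -> state G -> R) :
  (0 < #|G|)%N ->
  0 < nu < 1 ->
  (forall d, 0 <= d < eps -> is_rule (p d)) ->
  (forall d, 0 <= d < eps -> fixation_axiom (p d)) ->
  (* Assumption 2: weak selection *)
  (forall e x, smooth_on_Ico eps (fun d => p d e x)) ->
  (forall e x y, p 0 e x = p 0 e y) ->
  (* pi d u = pi_MSS at selection strength d and mutation probability u *)
  (forall d u, 0 <= d < eps -> 0 < u <= 1 -> stationary (p d) u nu (pi d u)) ->
  (* (a) *)
  (smooth_on_Ico eps (fun d => rho_A (p d) nu) /\
   smooth_on_Ico eps (fun d => rho_a (p d) nu) /\
   (forall x, x != st_a G -> x != st_A G ->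
      exists f : R -> R, smooth_on_Ico eps f /\
        forall d, 0 <= d < eps ->
          (pi d u x / (1 - pi d u (st_a G) - pi d u (st_A G))) @[u --> 0^'+]
            --> f d)) /\
  (* (b) *)
  (forall x, extends_uniquely_smooth eps (fun u d => pi d u x)) /\
  (* (c) *)
  (forall x, x != st_a G -> x != st_A G ->
     extends_uniquely_smooth eps
       (fun u d => pi d u x / (1 - pi d u (st_a G) - pi d u (st_A G)))).
Proof.
move=> _ /andP [nu_gt0 nu_lt1] p_rule p_fix p_smooth _ pi_stat.
have [fam [U [U_open Ico_U fam_derive fam_pk]]] :=
  smooth_on_Ico_chart (fun k : event G * state G => p_smooth k.1 k.2).
have fam_p e x d : 0 <= d < eps -> fam (e, x) 0%N d = p d e x by exact: fam_pk (e, x) d.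
split; [split; [|split]|split].
- by apply: (rho_A_smooth nu_gt0 nu_lt1 p_rule).
- by apply: (rho_a_smooth nu_gt0 nu_lt1 p_rule).
- by move=> x; apply: (pi_RMC_smooth nu_gt0 nu_lt1 p_rule).
- by move=> x; apply: (pi_extends_smooth nu_gt0 nu_lt1 p_rule).
- by move=> x; apply: (pi_cond_extends_smooth nu_gt0 nu_lt1 p_rule).
Qed.
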